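(* Let $p\ge1$, $\phi_1,\dots,\phi_p:\mathbb Z\to\mathbb C$ and integers $t>s$. Then $F_{t,s}=\Gamma_t\Gamma_{t-1}\cdots\Gamma_{s+1}$ is the $p\times p$ matrix whose $(i,m)$ entry is $\xi^{(m)}_{t-i+1,s}$, for $1\le i,m\le p$.
   Context: $\Gamma_t$ is the $p\times p$ companion matrix with first row $(\phi_1(t),\dots,\phi_p(t))$, entries $(i,i-1)$ equal to $1$ for $2\le i\le p$, and all other entries $0$. Convention: $\phi_l(t)=0$ for $l>p$. For integers $t>s$ and $1\le m\le p$, $\Phi^{(m)}_{t,s}$ is the $(t-s)\times(t-s)$ lower Hessenberg matrix whose $(i,j)$ entry is: $\phi_{m+i-1}(s+i)$ if $j=1$; $-1$ if $j=i+1$; $\phi_{i-j+1}(s+i)$ if $2\le j\le i$; $0$ if $j>i+1$. For $t\ge s-p+1$: $\xi^{(m)}_{t,s}=\det\Phi^{(m)}_{t,s}$ if $t>s$; $\xi^{(m)}_{t,s}=1$ if $t=s-m+1$; $\xi^{(m)}_{t,s}=0$ if $s-p+1\le t\le s$, $t\ne s-m+1$. *)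

From mathcomp Require Import all_boot all_order all_algebra.
Set Implicit Arguments. Unset Strict Implicit. Unset Printing Implicit Defensive.
Import Order.TTheory GRing.Theory Num.Theory.
Local Open Scope ring_scope.

Section Defs.
Variables (R : comRingType) (p : nat) (phi : 'I_p -> int -> R).

(* phiE l t = phi_l(t) with the paper's 1-based index l; phi_l = 0 for l > p
   (and, harmlessly, for l = 0, which never occurs). phi_{k+1} is [phi k]. *)
Definition phiE (l : nat) (t : int) : R :=
  if l is l'.+1 then
    (if (insub l' : option 'I_p) is Some k then phi k t else 0)
  else 0.

Definition Gamma (t : int) : 'M[R]_p :=
  \matrix_(i < p, j < p)
    if (i == 0 :> nat) then phiE j.+1 t
    else if (i == j.+1 :> nat) then 1 else 0.

(* F_{s+n,s} = Gamma_{s+n} Gamma_{s+n-1} ... Gamma_{s+1}  (identity for n = 0). *)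
Fixpoint Fprod (s : int) (n : nat) : 'M[R]_p :=
  match n with
  | 0 => 1%:M
  | n'.+1 => Gamma (s + n'.+1%:Z) *m Fprod s n'
  end.

(* Phi^{(m)}_{s+n,s}, an n x n lower Hessenberg matrix (0-based indices:
   paper's (i,j) is (i'+1, j'+1)). *)
Definition PhiM (m n : nat) (s : int) : 'M[R]_n :=
  \matrix_(i < n, j < n)
    if (j == 0 :> nat) then phiE (m + i) (s + i.+1%:Z)
    else if (j == i.+1 :> nat) then -1
    else if (j <= i)%N then phiE (i - j).+1 (s + i.+1%:Z)
    else 0.

(* xi^{(m)}_{t,s}; only meaningful for t >= s - p + 1 (value 0 below that range
   is an arbitrary convention, never used in the statement). *)
Definition xi (m : nat) (t s : int) : R :=
  if s < t then \det (PhiM m `|t - s|%N s)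
  else if t == s - m%:Z + 1 then 1 else 0.

End Defs.

From mathcomp Require Import all_boot all_order all_algebra zify.
Import Order.TTheory GRing.Theory Num.Theory.
Local Open Scope ring_scope.

(* Left multiplication by Gamma_t shifts the rows of a matrix down by one and
   puts sum_l phi_l(t) (row l) on top.  Hence, by induction on t - s, the
   column m of F_{t,s} is (x_t, x_(t-1), ..., x_(t-p+1)) for the sequence with
   x_t = sum_(l <= p) phi_l(t) x_(t-l) whose initial window x_(s-p+1), ..., x_s
   is the indicator of s - m + 1.  Expanding the lower Hessenberg determinant
   Phi^(m)_{t,s} along its last row shows that t |-> xi^(m)_{t,s} satisfies
   the same recurrence with the same initial window. *)

Lemma det_lower_hessenberg (R : comPzRingType) (n : nat) (f : nat -> nat -> R) :
  (forall i, (i < n)%N -> f i i.+1 = -1) ->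
  (forall i j, (i.+1 < j <= n)%N -> f i j = 0) ->
  \det (\matrix_(i < n.+1, j < n.+1) f i j) =
  \sum_(j < n.+1) f n j * \det (\matrix_(i < j, k < j) f i k).
Proof.
elim: n f => [|n IHn] f f_super f_upper.
  by rewrite big_ord1 det_mx11 det_mx00 mxE mulr1.
rewrite (expand_det_col _ ord_max) big_ord_recr big_ord_recr /=.
rewrite big1 ?add0r => [|i _]; last first.
  by rewrite mxE f_upper ?mul0r //=; have := ltn_ord i; lia.
have leading_minor : row' ord_max (col' ord_max (\matrix_(i, j) f i j))
    = \matrix_(i < n.+1, j < n.+1) f i j.
  by apply/matrixP=> i j; rewrite !mxE /= /bump !ltnNge !leq_ord.
pose g i j := f (bump n i) j.
have other_minor : row' (widen_ord (leqnSn _) ord_max)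
                     (col' ord_max (\matrix_(i, j) f i j))
    = \matrix_(i < n.+1, j < n.+1) g i j.
  by apply/matrixP=> i j; rewrite !mxE /= /g /bump [(n.+1 <= j)%N]leqNgt ltn_ord.
have g_low i : (i < n)%N -> g i = f i by move=> lt_in; rewrite /g /bump leqNgt lt_in.
have g_super i : (i < n)%N -> g i i.+1 = -1.
  by move=> lt_in; rewrite g_low // f_super //; lia.
have g_upper i j : (i.+1 < j <= n)%N -> g i j = 0.
  by move=> ij; rewrite g_low ?f_upper //; lia.
rewrite /cofactor leading_minor other_minor (IHn g g_super g_upper) !mxE /=.
have sign_odd : (-1) ^+ (n + n.+1) = -1 :> R.
  by rewrite -signr_odd addnS /= addnn odd_double.
have sign_even : (-1) ^+ (n.+1 + n.+1) = 1 :> R.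
  by rewrite -signr_odd addnn odd_double.
rewrite f_super // sign_odd sign_even !mulN1r opprK !mul1r [RHS]big_ord_recr /=.
congr (_ + _); apply: eq_bigr => j _; congr (_ * _).
  by rewrite /g /bump leqnn.
congr (\det _); apply/matrixP=> i k; rewrite !mxE g_low //.
by have := ltn_ord i; have := ltn_ord j; lia.
Qed.

Local Arguments phiE : simpl never.

Section CompanionProducts.
Variables (R : comNzRingType) (p : nat) (phi : 'I_p -> int -> R).

Lemma phiE_out l t : (p <= l)%N -> phiE phi l.+1 t = 0.
Proof. by move=> le_pl; rewrite /phiE insubN // -leqNgt. Qed.

Definition Phi_entry (m : nat) (s : int) (i j : nat) : R :=
  if j == 0 :> nat then phiE phi (m + i) (s + i.+1%:Z)
  else if j == i.+1 :> nat then -1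
  else if (j <= i)%N then phiE phi (i - j).+1 (s + i.+1%:Z)
  else 0.

Lemma PhiME m n s : PhiM phi m n s = \matrix_(i < n, j < n) Phi_entry m s i j.
Proof. by []. Qed.

Lemma xi_det m n s : xi phi m (s + n.+1%:Z) s = \det (PhiM phi m n.+1 s).
Proof.
rewrite /xi ifT; last by rewrite ltrDl.
by rewrite [s + _]addrC addrK absz_nat.
Qed.

Lemma xi_init m t s : t <= s -> xi phi m t s = (t == s - m%:Z + 1)%:R.
Proof. by move=> le_ts; rewrite /xi ltNge le_ts /=; case: eqP. Qed.

Lemma xi_expand m n s :
  xi phi m (s + n.+1%:Z) s =
  phiE phi (m + n) (s + n.+1%:Z) +
  \sum_(l < n) phiE phi l.+1 (s + n.+1%:Z) * xi phi m (s + n.+1%:Z - l.+1%:Z) s.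
Proof.
rewrite xi_det PhiME det_lower_hessenberg => [|i lt_in|i j ij]; first last.
- by rewrite /Phi_entry ifN ?ifN ?ifN //; lia.
- by rewrite /Phi_entry /= eqxx.
rewrite big_ord_recl det_mx00 mulr1; congr (_ + _).
rewrite [RHS](reindex_inj rev_ord_inj); apply: eq_bigr => j _.
have lt_jn := ltn_ord j.
rewrite -PhiME -xi_det lift0 /Phi_entry [_ == 0]/= eqSS ltn_eqF // lt_jn.
by congr (_ * xi _ _ _ _); rewrite /=; lia.
Qed.

Lemma xi_rec m n s :
  xi phi m.+1 (s + n.+1%:Z) s =
  \sum_(l < p) phiE phi l.+1 (s + n.+1%:Z) * xi phi m.+1 (s + n.+1%:Z - l.+1%:Z) s.
Proof.
set c := s + n.+1%:Z.
pose F l := phiE phi l.+1 c * xi phi m.+1 (c - l.+1%:Z) s.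
pose N := (p + n + m.+1)%N.
(* For l >= n the argument c - l - 1 lies in the initial window, where only
   l = n + m contributes: this term is the first-column entry phi_(m+n). *)
have F_out l : (p <= l)%N -> F l = 0 by move=> le_pl; rewrite /F phiE_out ?mul0r.
have F_init l : (n <= l)%N -> F l = phiE phi l.+1 c * (l == n + m)%N%:R.
  move=> le_nl; rewrite /F xi_init /c; last by lia.
  by congr (_ * (_ : bool)%:R); apply/eqP/idP => /eqP; lia.
have -> : \sum_(l < p) F l = \sum_(l < N) F l.
  rewrite (big_ord_widen N F) ?big_mkcond; last by lia.
  by apply: eq_bigr => l _; case: ltnP => // /F_out ->.
rewrite -(big_mkord xpredT) (@big_cat_nat _ _ _ n 0 N) //=; last by lia.
rewrite big_mkord xi_expand addrC; congr (_ + _).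
rewrite (bigD1_seq (n + m)%N) ?iota_uniq //=; last by rewrite mem_index_iota; lia.
rewrite F_init ?leq_addr // eqxx mulr1 big1_seq ?addr0 => [|l].
  by rewrite addSn addnC.
rewrite mem_index_iota => /andP[ne_l /andP[le_nl _]].
by rewrite F_init // (negbTE ne_l) mulr0.
Qed.

Lemma Gamma_mulmx_top t q (A : 'M_(p, q)) (i : 'I_p) j :
  i = 0%N :> nat -> (Gamma phi t *m A) i j = \sum_(k < p) phiE phi k.+1 t * A k j.
Proof. by move=> i0; rewrite mxE; apply: eq_bigr => k _; rewrite mxE i0. Qed.

Lemma Gamma_mulmx_shift t q (A : 'M_(p, q)) (i k : 'I_p) j :
  i = k.+1 :> nat -> (Gamma phi t *m A) i j = A k j.
Proof.
move=> ik; rewrite mxE (bigD1 k) //= big1 => [|k' ne_k'k].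
  by rewrite mxE ik eqxx mul1r addr0.
rewrite mxE ik /= eqSS (_ : (k == k' :> nat) = false) ?mul0r //.
by apply/negbTE; rewrite eq_sym.
Qed.

Lemma Fprod_xi s n :
  Fprod phi s n = \matrix_(i < p, m < p) xi phi m.+1 (s + n%:Z - i%:Z) s.
Proof.
elim: n => [|n IHn] /=; apply/matrixP=> i m; rewrite [RHS]mxE.
  rewrite mxE xi_init; last by lia.
  by congr (_ : bool)%:R; apply/eqP/eqP => [->|eq_im]; [|apply: ord_inj]; lia.
case: i => [[|i] lt_ip].
  rewrite Gamma_mulmx_top // subr0 xi_rec; apply: eq_bigr => k _.
  by rewrite IHn mxE; congr (_ * xi _ _ _ _); lia.
rewrite (@Gamma_mulmx_shift _ _ _ _ (Ordinal (ltnW lt_ip))) // IHn mxE.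
by congr (xi _ _ _ _); rewrite /=; lia.
Qed.

End CompanionProducts.

Theorem corollary2 (R : comRingType) (p : nat) (hp : (1 <= p)%N)
    (phi : 'I_p -> int -> R) (t s : int) (hts : s < t) :
  Fprod phi s `|t - s|%N =
  \matrix_(i < p, m < p) xi phi m.+1 (t - i%:Z) s.
Proof.
by rewrite Fprod_xi; apply/matrixP=> i m; rewrite !mxE; congr (xi _ _ _ _); lia.
Qed.
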